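(* Let $(G,c)\in P_m$. Then: (1) the number of faces of $G$ of either color is at most $m-2$; (2) the number of connected components of $G$ is at most $\lfloor m/3\rfloor$; (3) $\sum_{f\in F}(l_f-1)\le \frac m3$, where $F$ is the set of all faces of $G$.
   Context: $P_m$ is the set of pairs $(G,c)$ where $G$ is a simple graph on $m$ vertices with no isolated vertices, embedded in the $2$-sphere, and $c$ is a coloring of the faces of $G$ in black and white such that every edge bounds exactly one white face and exactly one black face. For a face $f$, $l_f$ denotes the number of connected components of $G$ that the face $f$ touches (i.e. the number of boundary components of $f$). *)

(* Combinatorial-map encoding of graphs embedded in the 2-sphere. *)
From mathcomp Require Import all_boot.
Set Implicit Arguments. Unset Strict Implicit. Unset Printing Implicit Defensive.

Section EmbeddedGraph.
Variable D : finType.           (* darts = half-edges *)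
Variables (sigma alpha : D -> D).
(* sigma : rotation around vertices; alpha : edge involution *)

(* face-traversal permutation: facial walks are its orbits *)
Definition phi (d : D) : D := sigma (alpha d).

Definition gadj : rel D := fun x y => (y == sigma x) || (y == alpha x).

(* number of classes of the equivalence relation connect e (e symmetric-closure
   is automatic here since sigma, alpha are permutations of a finite set) *)
Definition ncls (e : rel D) : nat := #|[set root e x | x : D]|.

Definition ncls_in (e : rel D) (C : {set D}) : nat := #|[set root e x | x in C]|.

Definition n_vertices := ncls (frel sigma).
Definition n_edges := ncls (frel alpha).
Definition n_walks := ncls (frel phi).
Definition n_components := ncls gadj.

Definition component (x : D) : {set D} := [set y | connect gadj x y].

(* a rotation system describing a simple graph, each connected component
   being embedded in the sphere (Euler characteristic 2) *)
Definition simple_plane_rotation_system : Prop :=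
  [/\ injective sigma /\ (forall d, alpha (alpha d) = d),
      (forall d, alpha d != d),
      (* no loops *)
      (forall d, ~~ fconnect sigma d (alpha d)),
      (* no multiple edges *)
      (forall d d', fconnect sigma d d' -> fconnect sigma (alpha d) (alpha d') -> d = d')
    & (* each component is a genus-0 map: V - E + W = 2 *)
      (forall x, ncls_in (frel sigma) (component x) + ncls_in (frel phi) (component x)
                 = ncls_in (frel alpha) (component x) + 2)].

(* Faces of the whole (possibly disconnected) embedding: each face is a set of
   facial walks, at most one from each component, and the bipartite incidence
   graph (components -- faces) is a tree. *)
Definition sphere_faces (Fc : finType) (face : D -> Fc) : Prop :=
  [/\ (forall f, exists d, face d = f),
      (forall d, face (phi d) = face d),
      (forall d d', face d = face d' -> connect gadj d d' -> fconnect phi d d'),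
      (* incidence graph connected *)
      (forall d d', connect (fun x y => gadj x y || (face x == face y)) d d')
    & (* incidence graph has (#comps + #faces - 1) edges, i.e. is a tree *)
      #|Fc| + n_components = n_walks + 1].

(* l_f : number of connected components of G touched by the face f *)
Definition nbound (Fc : finType) (face : D -> Fc) (f : Fc) : nat :=
  #|[set root gadj d | d : D & face d == f]|.

Definition in_P (m : nat) (Fc : finType) (face : D -> Fc) (color : Fc -> bool) : Prop :=
  [/\ simple_plane_rotation_system,
      sphere_faces face,
      n_vertices = m,
      0 < m
    & (* every edge bounds exactly one white and one black face *)
      forall d, color (face d) != color (face (alpha d))].

End EmbeddedGraph.

From Pilot Require Import Defs.
From mathcomp Require Import all_boot zify.
Set Implicit Arguments. Unset Strict Implicit. Unset Printing Implicit Defensive.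

(* Let V, E, W, C be the numbers of vertices, edges, facial walks and
   components.  The darts whose face has color b contain exactly one dart of
   each edge, so there are E of them; facial walks have length at least 3 (the
   graph is simple and every edge separates two faces), so the walks of color b
   number W_b <= E/3 and all walks W <= 2E/3.  Summing Euler's formula over the
   components gives V + W = E + 2C, hence W_b + 2C <= V.  Every component
   carries a walk of each color and every face of color b a walk of color b,
   which gives (1) and (2).  For (3), the faces-components incidence graph is a
   tree, so sum_f l_f <= W = #faces + C - 1, i.e. sum_f (l_f - 1) < C. *)

Lemma leq_mul_card_fibres (T T' : finType) (p : T -> T') (S : {set T})
    (R : {set T'}) k :
  {in S, forall x, p x \in R} ->
  {in R, forall r, k <= #|[set x in S | p x == r]|} ->
  k * #|R| <= #|S|.
Proof.
move=> pSR fibre_ge.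
rewrite -[#|S|]sum1_card (partition_big p (mem R)) //= mulnC -sum_nat_const.
apply: leq_sum => r /fibre_ge /leq_trans; apply.
by rewrite -sum1_card; apply/eq_leq/eq_bigl => x; rewrite inE.
Qed.

Section ClassCounting.
Variable T : finType.
Implicit Type S : {set T}.

Lemma ncls_in_setT (e : rel T) : ncls_in e [set: T] = ncls e.
Proof. by apply: eq_card => r; apply/imsetP/imsetP => -[x _ ->]; exists x. Qed.

Lemma root_connect_invariant (T' : eqType) (e : rel T) (g : T -> T') :
  (forall x y, connect e x y -> g x = g y) -> forall x, g (root e x) = g x.
Proof. by move=> g_inv x; rewrite (g_inv _ _ (connect_root e x)). Qed.

Lemma leq_card_imset_ncls_in (T' : finType) (e : rel T) (g : T -> T') S :
  (forall x y, connect e x y -> g x = g y) -> #|g @: S| <= ncls_in e S.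
Proof.
move=> g_inv; suff -> : g @: S = g @: (root e @: S) by apply: leq_imset_card.
by rewrite -imset_comp; apply: eq_imset => x; rewrite /= root_connect_invariant.
Qed.

Lemma sum_ncls_in_fibres (T' : finType) (e : rel T) (g : T -> T') :
  (forall x y, connect e x y -> g x = g y) ->
  \sum_(c : T') ncls_in e [set x | g x == c] = ncls e.
Proof.
move=> g_inv; rewrite /ncls -sum1_card (partition_big g predT) //=.
apply: eq_bigr => c _; rewrite sum1_card /ncls_in; apply: eq_card => r.
apply/imsetP/andP => [[x] | [/imsetP [x _ ->]] gc].
  by rewrite inE => gx ->; rewrite imset_f // (root_connect_invariant g_inv).
by exists x; rewrite // inE -(root_connect_invariant g_inv).
Qed.

Lemma ncls_sum_classes (e e' : rel T) :
  connect_sym e' -> subrel (connect e) (connect e') ->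
  ncls e = \sum_(r in [set root e' x | x : T]) ncls_in e [set y | connect e' r y].
Proof.
move=> sym_e' sub_e.
have root_inv x y : connect e x y -> root e' x = root e' y.
  by move/sub_e/(rootP sym_e').
rewrite -(sum_ncls_in_fibres root_inv) (bigID (mem [set root e' x | x : T])) /=.
rewrite [X in _ + X]big1 ?addn0 => [|c /imsetP no_root]; last first.
  rewrite /ncls_in; apply/eqP; rewrite cards_eq0 imset_eq0; apply/eqP/setP => x.
  by rewrite !inE; apply/negP => /eqP c_root; apply: no_root; exists x.
apply: eq_bigr => _ /imsetP [x _ ->]; congr ncls_in; apply/setP => y.
by rewrite !inE -root_connect // (root_root sym_e') eq_sym.
Qed.

End ClassCounting.

Section Orbits.
Variables (T : finType) (f : T -> T).

Lemma three_mul_ncls_in_le (S : {set T}) :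
  injective f -> (forall x, f x != x) -> (forall x, f (f x) != x) ->
  {in S, forall x, f x \in S} -> 3 * ncls_in (frel f) S <= #|S|.
Proof.
move=> f_inj f1_neq f2_neq f_S.
have f_sym : connect_sym (frel f) := fconnect_sym f_inj.
apply: (leq_mul_card_fibres (p := froot f)) => [x xS | _ /imsetP [x xS ->]].
  exact: imset_f.
have S_closed : fclosed f S by apply: intro_closed => // y _ /eqP <- /f_S.
set r := froot f x.
have rS : r \in S by rewrite -(closed_connect S_closed (connect_root _ x)).
have root_r y : fconnect f r y -> froot f y == r.
  by move/(rootP f_sym) <-; rewrite (root_root f_sym).
have fibre_r : [:: r; f r; f (f r)] \subset [set y in S | froot f y == r].
  apply/subsetP => y; rewrite !inE => /or3P [] /eqP ->.
  - by rewrite rS root_r ?connect0.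
  - by rewrite f_S // root_r ?fconnect1.
  - by rewrite !f_S // root_r // (connect_trans (fconnect1 f r)) ?fconnect1.
apply: leq_trans (subset_leq_card fibre_r).
apply/eq_leq/esym/card_uniqP.
by rewrite /= !inE negb_or (eq_sym r) f1_neq (eq_sym r) f2_neq eq_sym f1_neq.
Qed.

Lemma involution_swap_ncls (S : {set T}) :
  involutive f -> (forall x, (f x \in S) = (x \notin S)) -> #|S| = ncls (frel f).
Proof.
move=> fK f_swap; have orbit2 x y : fconnect f x y -> (y == x) || (y == f x).
  have inv : invariant f (fun z => [set z; f z]) =1 xpredT.
    by move=> z; rewrite /= fK setUC eqxx.
  by move/(fconnect_invariant inv)/setP/(_ y); rewrite !inE eqxx => ->.
rewrite /ncls.
have -> : [set froot f x | x : T] = froot f @: S.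
  apply/setP => r; apply/imsetP/imsetP => [[x _ ->] | [x _ ->]]; last by exists x.
  have [xS | xnS] := boolP (x \in S); first by exists x.
  exists (f x); first by rewrite f_swap.
  by apply/(rootP (fconnect_sym (can_inj fK))); apply: fconnect1.
rewrite card_in_imset // => x y xS yS /(rootP (fconnect_sym (can_inj fK))).
by case/orbit2/orP => /eqP // y_fx; move: yS; rewrite y_fx f_swap xS.
Qed.

Lemma involution_swap_card (S : {set T}) :
  involutive f -> (forall x, (f x \in S) = (x \notin S)) -> #|T| = 2 * #|S|.
Proof.
move=> fK f_swap; rewrite -(cardsC S) mul2n -addnn; congr (_ + _).
have -> : ~: S = f @: S.
  apply/setP => y; rewrite inE -f_swap; apply/idP/imsetP => [fyS | [x xS ->]].
    by exists (f y); rewrite ?fK.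
  by rewrite fK.
by rewrite card_imset //; apply: can_inj fK.
Qed.

End Orbits.

Section RotationSystem.
Variables (D : finType) (sigma alpha : D -> D).
Hypotheses (sigma_inj : injective sigma) (alphaK : involutive alpha).

Local Notation phi := (phi sigma alpha).
Local Notation gadj := (gadj sigma alpha).

Lemma phi_inj : injective phi.
Proof. by move=> x y /sigma_inj /(can_inj alphaK). Qed.

Lemma connect_sym_gadj : connect_sym gadj.
Proof.
have gadjE : gadj =2 relU (frel sigma) (frel alpha).
  by move=> x y; rewrite /Defs.gadj /= eq_sym (eq_sym y).
move=> x y; rewrite !(eq_connect gadjE); apply: relU_sym x y.
  exact: fconnect_sym.
exact/fconnect_sym/(can_inj alphaK).
Qed.

Lemma connect_sigma_gadj : subrel (connect (frel sigma)) (connect gadj).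
Proof.
by apply: connect_sub => x _ /eqP <-; rewrite connect1 // /Defs.gadj eqxx.
Qed.

Lemma connect_alpha_gadj : subrel (connect (frel alpha)) (connect gadj).
Proof.
by apply: connect_sub => x _ /eqP <-; rewrite connect1 // /Defs.gadj eqxx orbT.
Qed.

Lemma connect_phi_gadj : subrel (connect (frel phi)) (connect gadj).
Proof.
apply: connect_sub => x _ /eqP <-; apply: (@connect_trans _ _ (alpha x)).
  by rewrite connect1 // /Defs.gadj eqxx orbT.
by rewrite connect1 // /Defs.gadj eqxx.
Qed.

Lemma euler_sum :
  (forall x, ncls_in (frel sigma) (component sigma alpha x)
             + ncls_in (frel phi) (component sigma alpha x)
             = ncls_in (frel alpha) (component sigma alpha x) + 2) ->
  n_vertices sigma + n_walks sigma alpha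
  = n_edges alpha + 2 * n_components sigma alpha.
Proof.
move=> euler_component; rewrite /n_vertices /n_walks /n_edges /n_components.
rewrite (ncls_sum_classes connect_sym_gadj connect_sigma_gadj)
  (ncls_sum_classes connect_sym_gadj connect_phi_gadj)
  (ncls_sum_classes connect_sym_gadj connect_alpha_gadj) -big_split /=.
rewrite (eq_bigr _ (fun r _ => euler_component r)) big_split /= sum_nat_const.
by rewrite /ncls mulnC.
Qed.

Hypothesis no_loop : forall d, ~~ fconnect sigma d (alpha d).
Hypothesis no_multi_edge : forall d d',
  fconnect sigma d d' -> fconnect sigma (alpha d) (alpha d') -> d = d'.
Hypothesis sigma_fixfree : forall d, sigma d != d.

Lemma phi_fixfree d : phi d != d.
Proof.
apply/eqP => phi_d; apply/negP: (no_loop d).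
by rewrite (fconnect_sym sigma_inj) -{2}phi_d fconnect1.
Qed.

Lemma phi2_fixfree d : phi (phi d) != d.
Proof.
apply/eqP => phi2_d; set e := alpha d.
have e_fixed : sigma e = e.
  apply: no_multi_edge; first by rewrite (fconnect_sym sigma_inj) fconnect1.
  by rewrite /e alphaK -{2}phi2_d fconnect1.
by move/eqP: (sigma_fixfree e); rewrite e_fixed.
Qed.

Lemma three_mul_walks_le (S : {set D}) :
  {in S, forall x, phi x \in S} -> 3 * ncls_in (frel phi) S <= #|S|.
Proof. exact: three_mul_ncls_in_le phi_inj phi_fixfree phi2_fixfree. Qed.

End RotationSystem.

Section ColoredFaces.
Variables (D : finType) (sigma alpha : D -> D) (Fc : finType) (face : D -> Fc)
  (color : Fc -> bool).
Hypotheses (sigma_inj : injective sigma) (alphaK : involutive alpha).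
Hypothesis face_phi : forall d, face (phi sigma alpha d) = face d.
Hypothesis color_alpha : forall d, color (face d) != color (face (alpha d)).

Local Notation phi := (phi sigma alpha).
Local Notation gadj := (gadj sigma alpha).

Definition color_darts b := [set d | color (face d) == b].

Lemma face_fconnect_phi x y : fconnect phi x y -> face x = face y.
Proof. by apply: fconnect_invariant => z; rewrite /= face_phi eqxx. Qed.

Lemma face_sigma d : face (sigma d) = face (alpha d).
Proof. by rewrite -[in RHS]face_phi /Defs.phi alphaK. Qed.

Lemma sigma_fixfree d : sigma d != d.
Proof.
by apply: contraNneq (color_alpha d) => sigma_d; rewrite -face_sigma sigma_d.
Qed.

Lemma alpha_swap_color_darts b d :
  (alpha d \in color_darts b) = (d \notin color_darts b).
Proof.
by rewrite !inE; move: (color_alpha d); case: (color _); case: (color _); case: b.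
Qed.

Lemma phi_color_darts b : {in color_darts b, forall d, phi d \in color_darts b}.
Proof. by move=> d; rewrite !inE face_phi. Qed.

Lemma card_color_darts b : #|color_darts b| = n_edges alpha.
Proof. exact: involution_swap_ncls alphaK (alpha_swap_color_darts b). Qed.

Lemma card_darts : #|D| = 2 * n_edges alpha.
Proof.
by rewrite (involution_swap_card alphaK (alpha_swap_color_darts true)) card_color_darts.
Qed.

Lemma n_components_le_color_walks b :
  n_components sigma alpha <= ncls_in (frel phi) (color_darts b).
Proof.
have gadj_sym := connect_sym_gadj sigma_inj alphaK.
have root_inv x y : fconnect phi x y -> root gadj x = root gadj y.
  by move/connect_phi_gadj/(rootP gadj_sym).
apply: leq_trans (leq_card_imset_ncls_in (color_darts b) root_inv).
apply/subset_leq_card/subsetP => _ /imsetP [d _ ->].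
have [db | dnb] := boolP (d \in color_darts b); first exact: imset_f.
apply/imsetP; exists (alpha d); first by rewrite alpha_swap_color_darts.
by apply/(rootP gadj_sym)/connect_alpha_gadj/fconnect1.
Qed.

Hypothesis face_onto : forall f, exists d, face d = f.

Lemma card_color_faces_le b :
  #|[set f | color f == b]| <= ncls_in (frel phi) (color_darts b).
Proof.
apply: leq_trans (leq_card_imset_ncls_in (color_darts b) face_fconnect_phi).
apply/subset_leq_card/subsetP => f; have [d <-] := face_onto f.
by rewrite inE => db; apply: imset_f; rewrite inE.
Qed.

Lemma nbound_gt0 f : 0 < nbound sigma alpha face f.
Proof.
have [d <-] := face_onto f; apply/card_gt0P; exists (root gadj d).
by apply: imset_f; rewrite inE.
Qed.

Lemma sum_nbound_le : \sum_(f : Fc) nbound sigma alpha face f <= n_walks sigma alpha.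
Proof.
rewrite /n_walks -(sum_ncls_in_fibres face_fconnect_phi); apply: leq_sum => f _.
apply: leq_card_imset_ncls_in => x y /connect_phi_gadj.
exact/rootP/connect_sym_gadj.
Qed.

Hypothesis no_loop : forall d, ~~ fconnect sigma d (alpha d).
Hypothesis no_multi_edge : forall d d',
  fconnect sigma d d' -> fconnect sigma (alpha d) (alpha d') -> d = d'.
Hypothesis euler_component : forall x,
  ncls_in (frel sigma) (component sigma alpha x)
  + ncls_in (frel phi) (component sigma alpha x)
  = ncls_in (frel alpha) (component sigma alpha x) + 2.
Hypothesis faces_tree :
  #|Fc| + n_components sigma alpha = n_walks sigma alpha + 1.

Lemma color_walks_add_le b :
  ncls_in (frel phi) (color_darts b) + 2 * n_components sigma alpha
  <= n_vertices sigma.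
Proof.
have euler := euler_sum sigma_inj alphaK euler_component.
have walks_le := three_mul_walks_le sigma_inj alphaK no_loop no_multi_edge sigma_fixfree.
have := walks_le _ (@phi_color_darts b); rewrite card_color_darts.
have := walks_le [set: D] (fun d _ => in_setT (phi d)).
by rewrite ncls_in_setT -/(n_walks sigma alpha) cardsT card_darts; lia.
Qed.

Lemma sum_nbound_sub1_lt :
  \sum_(f : Fc) (nbound sigma alpha face f - 1) < n_components sigma alpha.
Proof.
have sum_nbound : \sum_(f : Fc) (nbound sigma alpha face f - 1) + #|Fc|
                  = \sum_(f : Fc) nbound sigma alpha face f.
  rewrite -sum1_card -big_split; apply: eq_bigr => f _.
  by rewrite /= subnK ?nbound_gt0.
by have := sum_nbound_le; lia.
Qed.

Lemma color_faces_add2_le b : #|[set f | color f == b]| + 2 <= n_vertices sigma.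
Proof.
have := card_color_faces_le b; have := color_walks_add_le b.
by have := sum_nbound_sub1_lt; lia.
Qed.

Lemma three_mul_n_components_le : 3 * n_components sigma alpha <= n_vertices sigma.
Proof.
have := color_walks_add_le true; have := n_components_le_color_walks true.
by lia.
Qed.

Lemma three_mul_sum_nbound_sub1_le :
  3 * \sum_(f : Fc) (nbound sigma alpha face f - 1) <= n_vertices sigma.
Proof. by have := three_mul_n_components_le; have := sum_nbound_sub1_lt; lia. Qed.

End ColoredFaces.

Theorem proposition2p2 (m : nat) (D : finType) (sigma alpha : D -> D)
    (Fc : finType) (face : D -> Fc) (color : Fc -> bool) :
  in_P sigma alpha m face color ->
  [/\ (forall b : bool, #|[set f : Fc | color f == b]| + 2 <= m),
      n_components sigma alpha <= m %/ 3
    & 3 * (\sum_(f : Fc) (nbound sigma alpha face f - 1)) <= m].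
Proof.
case=> [[[sigma_inj alphaK] _ no_loop no_multi_edge euler_component]
        [face_onto face_phi _ _ faces_tree] <- _ color_alpha].
split=> [b||].
- exact: color_faces_add2_le.
- by rewrite leq_divRL // mulnC; apply: three_mul_n_components_le.
- exact: three_mul_sum_nbound_sub1_le.
Qed.
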